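(* Let $\bar B>0$, $\gamma>0$, and let $\{E_t\}_{t\ge1}$ be i.i.d. non-negative with $\mathbb{E}[E_t]>0$. Let $\mathbf{g}$ be a policy that is admissible when the initial battery level is $b_1=\bar{B}$. Then for every $\epsilon>0$ there exists a policy $\tilde{\mathbf{g}}$ that is admissible when the initial battery level is $b_1=0$ and satisfies \[ \liminf_{n\to\infty}\mathscr{T}_n(\tilde{\mathbf{g}})\geq \liminf_{n\to\infty}\mathscr{T}_n(\mathbf{g})-\epsilon, \] where the throughput of $\mathbf{g}$ is computed with $b_1=\bar B$ and that of $\tilde{\mathbf{g}}$ with $b_1=0$.
   Context: An online policy $\mathbf{g}=\{g_t\}_{t\ge1}$ is a sequence of maps $g_t$ from $(E_1,\ldots,E_t)$ to $\mathbb{R}_+$. It is admissible for initial battery level $b_1$ if for every realization of the arrivals, $0\le g_t\le b_t$ for all $t\ge1$, where $b_t=\min\{b_{t-1}-g_{t-1}+E_t,\bar{B}\}$ for $t\ge 2$. The $n$-horizon expected throughput is $\mathscr{T}_n(\mathbf{g})=\frac{1}{n}\mathbb{E}\big[\sum_{t=1}^{n}\frac12\log_2(1+\gamma g_t(E_1,\ldots,E_t))\big]$. *)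

From HB Require Import structures.
From mathcomp Require Import all_boot all_order all_algebra.
From mathcomp Require Import all_classical all_reals all_analysis.
Set Implicit Arguments. Unset Strict Implicit. Unset Printing Implicit Defensive.
Import Order.TTheory GRing.Theory Num.Theory.
Import numFieldNormedType.Exports.
Local Open Scope classical_set_scope.
Local Open Scope ring_scope.

Section EH.
Context {d : measure_display} {T : measurableType d} {R : realType}
  (P : probability T R).

Definition mutually_independent (E : nat -> {RV P >-> R}) : Prop :=
  forall (I : seq nat) (A : nat -> set R), uniq I ->
    (forall i, measurable (A i)) ->
    P (\bigcap_(i in [set` I]) (E i @^-1` A i)) =
    (\prod_(i <- I) P (E i @^-1` A i))%E.

Definition identically_distributed (E : nat -> {RV P >-> R}) : Prop :=
  forall (t : nat) (A : set R), measurable A ->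
    P (E t @^-1` A) = P (E 0%N @^-1` A).

Definition iid (E : nat -> {RV P >-> R}) : Prop :=
  mutually_independent E /\ identically_distributed E.

(* Time is 0-based: index t here is time t+1 of the paper.
   A policy g : nat -> seq R -> R; the action at (0-based) time t is
   g t [:: E_0; ...; E_t] (the arrivals observed so far). *)
Definition action (E : nat -> {RV P >-> R}) (g : nat -> seq R -> R)
  (t : nat) (w : T) : R :=
  g t [seq E i w | i <- iota 0 t.+1].

Fixpoint battery (E : nat -> {RV P >-> R}) (Bbar b1 : R)
  (g : nat -> seq R -> R) (t : nat) (w : T) : R :=
  match t with
  | 0%N => b1
  | t'.+1 => Num.min (battery E Bbar b1 g t' w - action E g t' w + E t w) Bbar
  end.

Definition policy_measurable (E : nat -> {RV P >-> R}) (g : nat -> seq R -> R)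
  : Prop :=
  forall t, measurable_fun setT (action E g t).

Definition admissible (E : nat -> {RV P >-> R}) (Bbar b1 : R)
  (g : nat -> seq R -> R) : Prop :=
  forall (t : nat) (w : T),
    0 <= action E g t w /\ action E g t w <= battery E Bbar b1 g t w.

Definition log2 (x : R) : R := ln x / ln 2.

Definition throughput (E : nat -> {RV P >-> R}) (gamma : R)
  (g : nat -> seq R -> R) (n : nat) : \bar R :=
  ((n%:R)^-1)%:E *
  ('E_P[fun w => (\sum_(t < n) (2^-1 * log2 (1 + gamma * action E g t w)))%R])%E.

End EH.

(* Run g, but never spend more than the battery of the same policy started
   empty holds: gt_t = min (g_t, bt_t).  The battery b of g (started full) and
   the battery bt of gt (started empty) stay ordered, and since min (-, Bbar)
   is monotone and 1-Lipschitz, the gap b_t - bt_t plus the total energy that g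
   spent beyond gt never exceeds Bbar.  The per-slot reward 1/2 log2 (1 + gamma x)
   is gamma / (2 ln 2)-Lipschitz, so for every realization the first n rewards
   differ by at most gamma Bbar / (2 ln 2), and the n-horizon throughputs by that
   amount divided by n. *)

From HB Require Import structures.
From mathcomp Require Import all_boot all_order all_algebra.
From mathcomp Require Import all_classical all_reals all_analysis.
From mathcomp Require Import ring lra measurable_realfun.
Import Order.TTheory GRing.Theory Num.Theory.
Local Open Scope classical_set_scope.
Local Open Scope ring_scope.
Set Implicit Arguments. Unset Strict Implicit. Unset Printing Implicit Defensive.

Lemma sub_min_bounds {R : realDomainType} (x y B : R) : y <= x ->
  0 <= Num.min x B - Num.min y B <= x - y.
Proof.
move=> yx; rewrite !minEle; case: (lerP x B); case: (lerP y B) => *.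
all: apply/andP; split; lra.
Qed.

Section battery_coupling.
Context {R : realDomainType} (B : R) (a e b c bt : nat -> R).
Hypotheses (a_ge0 : forall t, 0 <= a t) (a_le : forall t, a t <= b t)
  (b0 : b 0%N = B) (bt0 : bt 0%N = 0)
  (cE : forall t, c t = Num.min (a t) (bt t))
  (bS : forall t, b t.+1 = Num.min (b t - a t + e t.+1) B)
  (btS : forall t, bt t.+1 = Num.min (bt t - c t + e t.+1) B).

Lemma battery_gap_invariant n :
  0 <= b n - bt n /\ \sum_(t < n) (a t - c t) + (b n - bt n) <= B.
Proof.
elim: n => [|n [gap0 IH]].
  have := a_le 0%N; rewrite big_ord0 b0 bt0 => a0_le; have := a_ge0 0%N.
  by split; lra.
have c_le_a : c n <= a n by rewrite cE ge_min lexx.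
have in_le : bt n - c n + e n.+1 <= b n - a n + e n.+1.
  by move: (a_le n); rewrite cE minEle; case: (lerP (a n) (bt n)) => *; lra.
have /andP[gap'0 gap'le] := sub_min_bounds B in_le.
by rewrite big_ord_recr /= bS btS; split; lra.
Qed.

Lemma sum_action_gap_le n : \sum_(t < n) (a t - c t) <= B.
Proof. by have [gap0 sum_le] := battery_gap_invariant n; lra. Qed.

End battery_coupling.

Lemma ln_sub_le {R : realType} (x y : R) : 1 <= y -> y <= x -> ln x - ln y <= x - y.
Proof.
move=> y1 yx; have y0 : 0 < y by lra.
have x0 : 0 < x by lra.
rewrite -ln_div ?posrE //.
have -> : x / y = 1 + (x - y) / y by field; lra.
apply: le_trans (le_ln1Dx _) _.
  have : 0 <= (x - y) / y by apply: divr_ge0; lra.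
  lra.
rewrite ler_pdivrMr //; have : 0 <= (x - y) * (y - 1) by apply: mulr_ge0; lra.
lra.
Qed.

Section rate.
Context {R : realType} (gamma : R).

Definition rate (x : R) : R := 2^-1 * log2 (1 + gamma * x).

Let ln2_gt0 : 0 < ln (2 : R). Proof. by apply: ln_gt0; lra. Qed.

Lemma rate_ge0 (x : R) : 0 <= gamma -> 0 <= x -> 0 <= rate x.
Proof.
move=> gamma_ge0 x0; apply: mulr_ge0; first lra.
apply: divr_ge0; last exact: ltW.
by apply: ln_ge0; have := mulr_ge0 gamma_ge0 x0; lra.
Qed.

Lemma rate_sub_le (x y : R) : 0 <= gamma -> 0 <= y -> y <= x ->
  rate x - rate y <= gamma / (2 * ln 2) * (x - y).
Proof.
move=> gamma_ge0 y0 yx; rewrite /rate /log2.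
have gy0 : 0 <= gamma * y by apply: mulr_ge0.
have gyx : gamma * y <= gamma * x by rewrite ler_wpM2l.
have -> : 2^-1 * (ln (1 + gamma * x) / ln 2) - 2^-1 * (ln (1 + gamma * y) / ln 2)
  = (ln (1 + gamma * x) - ln (1 + gamma * y)) / (2 * ln 2).
  by field; rewrite lt0r_neq0.
have -> : gamma / (2 * ln 2) * (x - y) = (1 + gamma * x - (1 + gamma * y)) / (2 * ln 2).
  by field; rewrite lt0r_neq0.
by rewrite ler_pM2r ?invr_gt0 ?mulr_gt0 // ln_sub_le //; lra.
Qed.

Lemma measurable_rate : measurable_fun setT rate.
Proof.
apply: measurable_funM; first exact: measurable_cst.
apply: measurable_funM; last exact: measurable_cst.
apply: measurableT_comp; first exact: measurable_ln.
apply: measurable_funD; first exact: measurable_cst.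
by apply: measurable_funM; [exact: measurable_cst|exact: measurable_id].
Qed.

End rate.

Lemma ge0_expectationD_cst {d} {T : measurableType d} {R : realType}
    (P : probability T R) (X : T -> R) (c : R) :
  measurable_fun setT X -> (forall w, 0 <= X w) -> 0 <= c ->
  ('E_P[X \+ cst c] = 'E_P[X] + c%:E)%E.
Proof.
move=> mX X0 c0; rewrite -(expectation_cst P c) unlock /=.
under eq_integral do rewrite EFinD.
rewrite ge0_integralD //.
- by move=> w _; rewrite lee_fin.
- exact/measurable_EFinP.
Qed.

Lemma limn_einf_le_near {R : realType} (u v : (\bar R)^nat) :
  (\forall n \near \oo, (u n <= v n)%E) -> (limn_einf u <= limn_einf v)%E.
Proof.
move=> [N _ uv]; rewrite !limn_einf_lim.
apply: lee_lim; [exact: is_cvg_einfs|exact: is_cvg_einfs|].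
exists N => // n /= Nn; apply: le_ereal_inf_tmp => _ [k /= nk <-].
by apply: le_trans (uv k (leq_trans Nn nk)); apply: ereal_inf_lbound; exists k.
Qed.

Lemma near_inv_natr_mul_le {R : realType} (c e : R) : 0 < e ->
  \forall n \near \oo, (n%:R)^-1 * c <= e.
Proof.
move=> e0; exists (Num.truncn (c / e)).+1 => // n /= Nn.
have n_gt : c / e < n%:R.
  by apply: lt_le_trans (truncnS_gt _) _; rewrite ler_nat.
have n0 : 0 < n%:R :> R by rewrite ltr0n (leq_trans _ Nn).
rewrite ltr_pdivrMr // in n_gt.
by rewrite mulrC ler_pdivrMr //; lra.
Qed.

Section truncated_policy.
Context {R : realType} (Bbar : R) (g : nat -> seq R -> R).

(* The battery level of [trunc_policy] started empty, recomputed from the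
   arrivals [s = [:: E_0; ...; E_t]] (see [battery_trunc_policyE]). *)
Fixpoint trunc_battery (t : nat) (s : seq R) : R :=
  if t is t'.+1 then
    Num.min (trunc_battery t' s - Num.min (g t' (take t'.+1 s)) (trunc_battery t' s)
             + nth 0 s t) Bbar
  else 0.

Lemma trunc_batteryS t s : trunc_battery t.+1 s =
  Num.min (trunc_battery t s - Num.min (g t (take t.+1 s)) (trunc_battery t s)
           + nth 0 s t.+1) Bbar.
Proof. by []. Qed.

Definition trunc_policy (t : nat) (s : seq R) : R :=
  Num.min (g t s) (trunc_battery t s).

End truncated_policy.

Section truncated_policy_properties.
Context {d : measure_display} {T : measurableType d} {R : realType}
  (P : probability T R) (E : nat -> {RV P >-> R}) (Bbar : R) (g : nat -> seq R -> R).

Local Notation gt := (trunc_policy Bbar g).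

Lemma battery_trunc_policyS t w : battery E Bbar 0 gt t.+1 w =
  Num.min (battery E Bbar 0 gt t w - action E gt t w + E t.+1 w) Bbar.
Proof. by []. Qed.

Lemma battery_trunc_policyE k t w : (k <= t)%N ->
  battery E Bbar 0 gt k w = trunc_battery Bbar g k [seq E i w | i <- iota 0 t.+1].
Proof.
elim: k t => [//|k IH] t kt; rewrite battery_trunc_policyS trunc_batteryS.
have take_arrivals :
    take k.+1 [seq E i w | i <- iota 0 t.+1] = [seq E i w | i <- iota 0 k.+1].
  by rewrite -map_take take_iota (minn_idPl (ltnW kt : k.+1 <= t.+1)%N).
have nth_arrivals : nth 0 [seq E i w | i <- iota 0 t.+1] k.+1 = E k.+1 w.
  by rewrite (nth_map 0%N) ?size_iota // nth_iota.
by rewrite take_arrivals nth_arrivals /action /trunc_policy -(IH k) // -IH // ltnW.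
Qed.

Lemma action_trunc_policy t w :
  action E gt t w = Num.min (action E g t w) (battery E Bbar 0 gt t w).
Proof. by rewrite /action /trunc_policy (battery_trunc_policyE _ (leqnn t)). Qed.

Lemma battery_trunc_policy_ge0 t w : 0 <= Bbar -> (forall t w, 0 <= E t w) ->
  0 <= battery E Bbar 0 gt t w.
Proof.
move=> Bbar_ge0 E_ge0; elim: t => [//|t IH].
have act_le : action E gt t w <= battery E Bbar 0 gt t w.
  by rewrite action_trunc_policy ge_min lexx orbT.
by rewrite battery_trunc_policyS le_min Bbar_ge0 andbT; have := E_ge0 t.+1 w; lra.
Qed.

Lemma admissible_trunc_policy : 0 <= Bbar -> (forall t w, 0 <= E t w) ->
  (forall t w, 0 <= action E g t w) -> admissible E Bbar 0 gt.
Proof.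
move=> Bbar_ge0 E_ge0 g_ge0 t w; rewrite action_trunc_policy; split.
  by rewrite le_min g_ge0 battery_trunc_policy_ge0.
by rewrite ge_min lexx orbT.
Qed.

Lemma measurable_trunc_policy : policy_measurable E g -> policy_measurable E gt.
Proof.
move=> mg.
have actE t : action E gt t =
    (fun w => Num.min (action E g t w) (battery E Bbar 0 gt t w)).
  by apply/funext => w; exact: action_trunc_policy.
have mbat t : measurable_fun setT (battery E Bbar 0 gt t).
  elim: t => [|t IH]; first exact: measurable_cst.
  apply: measurable_minr; last exact: measurable_cst.
  apply: measurable_funD; last exact: measurable_funP.
  by apply: measurable_funB => //; rewrite actE; exact: measurable_minr.
by move=> t; rewrite actE; exact: measurable_minr.
Qed.

End truncated_policy_properties.

Section throughput_of_truncation.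
Context {d : measure_display} {T : measurableType d} {R : realType}
  (P : probability T R) (E : nat -> {RV P >-> R}) (Bbar gamma : R)
  (g : nat -> seq R -> R).

Local Notation gt := (trunc_policy Bbar g).
Local Notation total_rate h n := (fun w => \sum_(t < n) rate gamma (action E h t w)).

Lemma total_rate_le_trunc_policy n w : 0 <= gamma -> 0 <= Bbar ->
  (forall t w, 0 <= E t w) -> admissible E Bbar Bbar g ->
  total_rate g n w <= total_rate gt n w + gamma / (2 * ln 2) * Bbar.
Proof.
move=> gamma_ge0 Bbar_ge0 E_ge0 adm.
have gt_le t : action E gt t w <= action E g t w.
  by rewrite action_trunc_policy ge_min lexx.
have gt_ge0 t : 0 <= action E gt t w.
  by have [] := admissible_trunc_policy Bbar_ge0 E_ge0 (fun t w => (adm t w).1) t w.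
have gap := sum_action_gap_le (B := Bbar) (e := fun t => E t w)
  (fun t => (adm t w).1) (fun t => (adm t w).2) (erefl _) (erefl _)
  (fun t => action_trunc_policy E Bbar g t w) (fun t => erefl)
  (fun t => battery_trunc_policyS E Bbar g t w) n.
rewrite -lerBlDl -sumrB.
apply: (@le_trans _ _
  (\sum_(t < n) gamma / (2 * ln 2) * (action E g t w - action E gt t w))).
  by apply: ler_sum => t _; exact: rate_sub_le.
rewrite -mulr_sumr; apply: ler_wpM2l gap.
by rewrite divr_ge0 ?mulr_ge0 ?ln_ge0 //; lra.
Qed.

Lemma throughput_le_trunc_policy n : 0 <= gamma -> 0 <= Bbar ->
  (forall t w, 0 <= E t w) -> policy_measurable E g -> admissible E Bbar Bbar g ->
  (throughput E gamma g n <=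
   throughput E gamma gt n + ((n%:R)^-1 * (gamma / (2 * ln 2) * Bbar))%:E)%E.
Proof.
move=> gamma_ge0 Bbar_ge0 E_ge0 mg adm.
have adm_gt := admissible_trunc_policy Bbar_ge0 E_ge0 (fun t w => (adm t w).1).
have mgt := measurable_trunc_policy Bbar mg.
have mtotal h : policy_measurable E h -> measurable_fun setT (total_rate h n).
  move=> mh; apply: measurable_sum => t.
  exact: measurableT_comp (measurable_rate _) (mh t).
have total_ge0 b1 h : admissible E Bbar b1 h -> forall w, 0 <= total_rate h n w.
  by move=> admh w; apply: sumr_ge0 => t _; apply: rate_ge0 => //; have [] := admh t w.
set C := gamma / (2 * ln 2) * Bbar.
have C_ge0 : 0 <= C by rewrite mulr_ge0 ?divr_ge0 ?mulr_ge0 ?ln_ge0 //; lra.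
have expectation_le_cst :
    ('E_P[total_rate g n] <= 'E_P[total_rate gt n \+ cst C])%E.
  apply: expectation_le.
  - exact: mtotal.
  - by apply: measurable_funD; [exact: mtotal _ mgt|exact: measurable_cst].
  - exact: total_ge0 adm.
  - by move=> w; rewrite /= addr_ge0 // (total_ge0 _ _ adm_gt).
  - by apply: aeW => w; exact: total_rate_le_trunc_policy.
rewrite ge0_expectationD_cst // in expectation_le_cst; last first.
  - exact: total_ge0 adm_gt.
  - exact: mtotal _ mgt.
rewrite /throughput EFinM -ge0_muleDr ?lee_wpmul2l ?lee_fin ?invr_ge0 //.
exact: expectation_ge0 (total_ge0 _ _ adm_gt).
Qed.

End throughput_of_truncation.

Theorem proposition6 (d : measure_display) (T : measurableType d)
  (R : realType) (P : probability T R) (E : nat -> {RV P >-> R})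
  (Bbar gamma : R) (g : nat -> seq R -> R) :
  0 < Bbar -> 0 < gamma ->
  iid E -> (forall t w, 0 <= E t w) -> ('E_P[E 0%N] > 0)%E ->
  policy_measurable E g -> admissible E Bbar Bbar g ->
  forall eps : R, 0 < eps ->
  exists gt : nat -> seq R -> R,
    policy_measurable E gt /\ admissible E Bbar 0 gt /\
    (limn_einf (throughput E gamma gt) >=
     limn_einf (throughput E gamma g) - eps%:E)%E.
Proof.
move=> /ltW Bbar_ge0 /ltW gamma_ge0 _ E_ge0 _ mg adm eps eps_gt0.
exists (trunc_policy Bbar g); split; first exact: measurable_trunc_policy.
split; first exact: admissible_trunc_policy Bbar_ge0 E_ge0 (fun t w => (adm t w).1).
rewrite addeC -limn_einf_shift //; apply: limn_einf_le_near.
apply: filterS (near_inv_natr_mul_le (gamma / (2 * ln 2) * Bbar) eps_gt0) => n small.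
rewrite addeC leeBlDr //.
apply: le_trans (throughput_le_trunc_policy n gamma_ge0 Bbar_ge0 E_ge0 mg adm) _.
by rewrite leeD2l // lee_fin.
Qed.
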